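(* Let $x,y\in S_n$ and let $M$ be the $2\times n$ matrix with rows $x$ and $y$. Suppose every column of $M$ is one of $(1,1)^T,(1,-1)^T,(1,0)^T,(0,1)^T,(0,0)^T$, occurring $a_1,a_2,b_1,b_2,c$ times respectively ($a_1+a_2+b_1+b_2+c=n$). Then $$|\mathrm{Elim}(\{x\})\cap\mathrm{Elim}(\{y\})|=3^c\big(2^{b_1+b_2}(2^{a_1}+2^{a_2})-2^{b_1+1}-2^{b_2+1}+2\big)$$ and $$|\mathrm{Elim}(\{x,y\})|=3^c\big(3^{b_1}2^{a_1+a_2+b_2}+3^{b_2}2^{a_1+a_2+b_1}-2^{b_1+b_2}(2^{a_1}+2^{a_2})-3^{b_1}-3^{b_2}+2^{b_1+1}+2^{b_2+1}-2\big).$$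
   Context: $S_n$ is the set of all nonzero $n$-tuples in $\{-1,0,1\}^n$ whose first nonzero entry equals $1$. A tuple $t=(t_1,\dots,t_n)\in\{1,0,-1,u\}^n$ ($u$ a formal symbol) eliminates $s\in S_n$ if: (i) $t_i\neq0$ and $s_i\neq0$ for some $i$; (ii) there is $k\in\{+1,-1\}$ with $t_i=ks_i$ for all $i$ with $s_i\neq0$ and $t_i\neq0$; (iii) $s_i=0$ whenever $t_i=u$. For $X\subseteq S_n$, $\mathrm{Elim}(X)$ is the set of elements of $S_n$ eliminated by at least one element of $X$. *)

From HB Require Import structures.
From mathcomp Require Import all_boot all_order all_algebra.
Set Implicit Arguments. Unset Strict Implicit. Unset Printing Implicit Defensive.

Inductive trit := TNeg | TZero | TPos.

Definition trit_to_ord (x : trit) : 'I_3 :=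
  match x with TNeg => inord 0 | TZero => inord 1 | TPos => inord 2 end.
Definition ord_to_trit (i : 'I_3) : option trit :=
  match val i with 0 => Some TNeg | 1 => Some TZero | 2 => Some TPos | _ => None end.
Lemma tritK : pcancel trit_to_ord ord_to_trit.
Proof. by case; rewrite /ord_to_trit /= inordK. Qed.
HB.instance Definition _ := Finite.copy trit (pcan_type tritK).

Definition tval (x : trit) : int :=
  match x with TNeg => (-1)%R | TZero => 0%R | TPos => 1%R end.

Definition vec n := {ffun 'I_n -> trit}.
(* elements of {1,0,-1,u}^n : None stands for the formal symbol u *)
Definition uvec n := {ffun 'I_n -> option trit}.

Definition S_ (n : nat) : {set vec n} :=
  [set s : vec n | [exists i, s i != TZero] &&
     [forall i, ((s i != TZero) && [forall j : 'I_n, (j < i)%N ==> (s j == TZero)])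
                  ==> (s i == TPos)]].

Definition unz (a : option trit) : bool := a != Some TZero.

Definition eliminates n (t : uvec n) (s : vec n) : bool :=
  [&& [exists i, unz (t i) && (s i != TZero)],
      [exists k : bool,
         [forall i, ((s i != TZero) && unz (t i)) ==>
            match t i with
            | Some a => tval a == ((if k then 1 else -1) * tval (s i))%R
            | None => false
            end]]
    & [forall i, (t i == None) ==> (s i == TZero)]].

Definition Elim n (X : {set uvec n}) : {set vec n} :=
  [set s in S_ n | [exists t in X, eliminates t s]].

Definition emb n (s : vec n) : uvec n := [ffun i => Some (s i)].

Definition ElimS n (X : {set vec n}) : {set vec n} := Elim [set emb s | s in X].

Definition ncol n (x y : vec n) (a b : trit) : nat :=
  #|[set i : 'I_n | (x i == a) && (y i == b)]|.

(* Elimination of [s] by [x] means that [s] does not vanish on the support of [x] and agrees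
   there, up to zeros, with [x] or with [-x]; as the last two conditions overlap exactly when
   [s] vanishes on the support, its indicator is [agree x + agree (-x) - 2 vanish].  Each of these
   conditions, and each conjunction of one on [x] with one on [y], constrains the coordinates of
   [s] independently, so the number of [s] satisfying it is a product over the columns of
   [(x; y)] and depends only on how many columns there are of each type.  Finally elimination
   is invariant under [s |-> -s], which exchanges S_n with the other nonzero vectors, so every
   count over S_n is half the count over {-1,0,1}^n. *)

From Pilot Require Import Defs.
From HB Require Import structures.
From mathcomp Require Import all_boot all_order all_algebra.
From mathcomp Require Import ring.
Import GRing.Theory.
Local Open Scope ring_scope.
Set Implicit Arguments. Unset Strict Implicit.

Lemma eq_tritE (a b : trit) : (a == b) =
  match a, b with TNeg, TNeg | TZero, TZero | TPos, TPos => true | _, _ => false end.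
Proof. by case: a; case: b => //=; apply/eqP. Qed.

Lemma index_enum_trit : perm_eq (index_enum trit) [:: TNeg; TZero; TPos].
Proof.
apply: uniq_perm; first exact: index_enum_uniq; first by rewrite /= !inE !eq_tritE.
by case; rewrite mem_index_enum !inE !eq_tritE.
Qed.

Lemma big_trit (R : Type) (idx : R) (op : Monoid.com_law idx) (F : trit -> R) :
  \big[op/idx]_(t : trit) F t = op (F TNeg) (op (F TZero) (op (F TPos) idx)).
Proof. by rewrite (perm_big _ index_enum_trit) !big_cons big_nil. Qed.

Lemma card_trit (P : pred trit) : #|P| = size [seq t <- [:: TNeg; TZero; TPos] | P t].
Proof. by rewrite cardE -(perm_size (perm_filter P index_enum_trit)) size_filter. Qed.

Definition tneg (a : trit) : trit :=
  match a with TNeg => TPos | TZero => TZero | TPos => TNeg end.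

Lemma tnegK : involutive tneg. Proof. by case. Qed.

Lemma tneg_eq0 (a : trit) : (tneg a == TZero) = (a == TZero).
Proof. by case: a; rewrite /= !eq_tritE. Qed.

Lemma tval_tneg (a : trit) : Defs.tval (tneg a) = - Defs.tval a.
Proof. by case: a; rewrite /= ?opprK ?oppr0. Qed.

Lemma card_lincomb (T : finType) (P : pred T) (L : seq (int * pred T)) :
  (forall s, (P s)%:R = \sum_(j <- L) j.1 * (j.2 s)%:R :> int) ->
  #|[set s | P s]|%:R = \sum_(j <- L) j.1 * #|[set s | j.2 s]|%:R :> int.
Proof.
have card_sum (Q : pred T) : #|[set s | Q s]|%:R = \sum_s (Q s)%:R :> int.
  rewrite -sum1_card big_mkcond natr_sum; apply: eq_bigr => s _.
  by rewrite inE; case: (Q s).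
move=> P_comb; rewrite card_sum (eq_bigr _ (fun s _ => P_comb s)) {P_comb}.
elim: L => [|j L IHL]; first by rewrite big_nil big1 // => s _; rewrite big_nil.
rewrite big_cons -IHL card_sum mulr_sumr -big_split.
by apply: eq_bigr => s _; rewrite big_cons.
Qed.

Section Vectors.

Variable n : nat.
Implicit Types (x y s : vec n) (t : uvec n).

Definition vneg s : vec n := [ffun i => tneg (s i)].

Lemma vnegK : involutive vneg.
Proof. by move=> s; apply/ffunP => i; rewrite !ffunE tnegK. Qed.

Lemma eliminates_vneg t s : eliminates t (vneg s) = eliminates t s.
Proof.
rewrite /eliminates; congr [&& _, _ & _].
- by apply: eq_existsb => i; rewrite ffunE tneg_eq0.
- apply/existsP/existsP => -[k /forallP Hk]; exists (~~ k); apply/forallP => i;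
    have := Hk i; rewrite ffunE tneg_eq0 tval_tneg;
    by case: (t i) => // a; case: k {Hk}; rewrite /= ?mulN1r ?mul1r ?opprK.
- by apply: eq_forallb => i; rewrite ffunE tneg_eq0.
Qed.

Lemma eliminates_nonzero t s : eliminates t s -> [exists i, s i != TZero].
Proof. by case/and3P => /existsP[i /andP[_ nz_si]] _ _; apply/existsP; exists i. Qed.

Definition first_nonzero s (i : 'I_n) : bool :=
  (s i != TZero) && [forall j : 'I_n, (j < i)%N ==> (s j == TZero)].

Lemma first_nonzero_exists s : [exists i, s i != TZero] -> exists i, first_nonzero s i.
Proof.
case/existsP=> i0 nz_i0.
have [i nz_i min_i] := @arg_minnP _ i0 (fun i => s i != TZero) (@nat_of_ord n) nz_i0.
exists i; rewrite /first_nonzero nz_i; apply/forallP => j; apply/implyP.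
by apply: contraTT => nz_j; rewrite -leqNgt min_i.
Qed.

Lemma first_nonzero_uniq s i j : first_nonzero s i -> first_nonzero s j -> i = j.
Proof.
move=> /andP[nz_i /forallP before_i] /andP[nz_j /forallP before_j].
case: (ltngtP i j) => [lt_ij|lt_ji|/val_inj //].
- by move: nz_i; rewrite (implyP (before_j i) lt_ij).
- by move: nz_j; rewrite (implyP (before_i j) lt_ji).
Qed.

Lemma in_S_first_nonzero s i : first_nonzero s i -> (s \in S_ n) = (s i == TPos).
Proof.
move=> first_i; rewrite inE.
have -> : [exists i, s i != TZero] by apply/existsP; exists i; case/andP: first_i.
apply/forallP/idP => [all_first | pos_i j]; first exact: implyP (all_first i) first_i.
by apply/implyP => first_j; rewrite -(first_nonzero_uniq first_i first_j).
Qed.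

Lemma first_nonzero_vneg s i : first_nonzero (vneg s) i = first_nonzero s i.
Proof.
rewrite /first_nonzero ffunE tneg_eq0; congr (_ && _).
by apply: eq_forallb => j; rewrite ffunE tneg_eq0.
Qed.

Lemma vneg_S s : [exists i, s i != TZero] -> (vneg s \in S_ n) = (s \notin S_ n).
Proof.
case/first_nonzero_exists=> i first_i.
rewrite (in_S_first_nonzero first_i) (@in_S_first_nonzero _ i) ?first_nonzero_vneg // ffunE.
by case/andP: first_i; case: (s i); rewrite /= !eq_tritE.
Qed.

Lemma card_S_half (P : pred (vec n)) :
  (forall s, P (vneg s) = P s) -> (forall s, P s -> [exists i, s i != TZero]) ->
  (2 * #|[set s in S_ n | P s]| = #|[set s | P s]|)%N.
Proof.
move=> P_vneg P_nz.
rewrite -(cardsID (S_ n) [set s | P s]) mul2n -addnn; congr (_ + _).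
  by apply: eq_card => s; rewrite !inE andbC.
rewrite -(card_imset _ (can_inj vnegK)); apply: eq_card => s.
apply/imsetP/setDP => [[s' /setIdP[S_s' P_s'] ->] | [P_s notS_s]].
  rewrite vneg_S ?S_s' ?inE ?P_vneg //; exact: P_nz.
rewrite inE in P_s; exists (vneg s); last by rewrite vnegK.
by apply/setIdP; rewrite vneg_S ?P_vneg //; exact: P_nz.
Qed.

(* Condition (ii) of elimination by [emb x] with sign [k], read on the column [(x i, s i)]. *)
Definition sign_agree (k : bool) (a t : trit) : bool :=
  match a, t with
  | TZero, _ | _, TZero => true
  | TPos, TPos | TNeg, TNeg => k
  | _, _ => ~~ k
  end.

Definition vanish (a t : trit) : bool :=
  match a, t with TZero, _ | _, TZero => true | _, _ => false end.

Definition coordwise (R : rel trit) x s : bool := [forall i, R (x i) (s i)].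

Lemma eliminates_embE x s : eliminates (emb x) s =
  ~~ coordwise vanish x s && (coordwise (sign_agree true) x s || coordwise (sign_agree false) x s).
Proof.
have emb_unz i : unz (emb x i) = (x i != TZero).
  by rewrite ffunE /unz (inj_eq Some_inj).
rewrite /eliminates; have -> : [forall i, (emb x i == None) ==> (s i == TZero)].
  by apply/forallP => i; rewrite ffunE.
rewrite andbT; congr (_ && _).
  rewrite negb_forall; apply: eq_existsb => i; rewrite emb_unz.
  by case: (x i); case: (s i); rewrite /= !eq_tritE.
rewrite (@eq_existsb _ _ (fun k => coordwise (sign_agree k) x s)) => [|k].
  apply/existsP/orP => [[[] agree] | [agree | agree]];
    by [left | right | exists true | exists false].
apply: eq_forallb => i; rewrite emb_unz ffunE.
by case: k; case: (x i); case: (s i); rewrite /= !eq_tritE.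
Qed.

Lemma vanish_sign_agree k x s : coordwise vanish x s -> coordwise (sign_agree k) x s.
Proof.
move=> /forallP vanish_xs; apply/forallP => i; move: (vanish_xs i).
by case: k; case: (x i); case: (s i).
Qed.

Lemma sign_agree_both x s : coordwise (sign_agree true) x s ->
  coordwise (sign_agree false) x s -> coordwise vanish x s.
Proof.
move=> /forallP agree_true /forallP agree_false; apply/forallP => i.
by move: (agree_true i) (agree_false i); case: (x i); case: (s i).
Qed.

Lemma eliminates_emb_indicator x s : (eliminates (emb x) s)%:R =
  (coordwise (sign_agree true) x s)%:R + (coordwise (sign_agree false) x s)%:R
    - 2 * (coordwise vanish x s)%:R :> int.
Proof.
rewrite eliminates_embE; have [vanish_xs | ] := boolP (coordwise vanish x s).
  by rewrite !vanish_sign_agree.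
case agree_true: (coordwise (sign_agree true) x s);
  case agree_false: (coordwise (sign_agree false) x s) => //= nvanish.
by move: nvanish; rewrite sign_agree_both.
Qed.

Definition unconstrained : rel trit := fun _ _ => true.

Lemma coordwise_unconstrained x s : coordwise unconstrained x s.
Proof. exact/forallP. Qed.

Definition coordwise2 (P Q : rel trit) x y : pred (vec n) :=
  fun s => coordwise P x s && coordwise Q y s.

Definition col_count (P Q : rel trit) (a b : trit) : nat := #|[pred t | P a t && Q b t]|.

Lemma card_coordwise2 P Q x y :
  #|[set s | coordwise2 P Q x y s]| = (\prod_i col_count P Q (x i) (y i))%N.
Proof.
rewrite -(@eq_card _ (family (fun i => [pred t | P (x i) t && Q (y i) t]))) => [|s].
  by rewrite card_family foldrE big_map big_enum.
rewrite inE; apply/familyP/andP => [coord_s | [/forallP P_s /forallP Q_s] i].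
  by split; apply/forallP => i; case/andP: (coord_s i).
by rewrite inE P_s Q_s.
Qed.

Lemma prod_ncol (f : trit -> trit -> nat) x y :
  (\prod_i f (x i) (y i) = \prod_(a : trit) \prod_(b : trit) f a b ^ ncol x y a b)%N.
Proof.
rewrite (pair_big predT predT (fun a b => f a b ^ ncol x y a b)%N) /=.
rewrite (partition_big (fun i => (x i, y i)) predT) //=.
apply: eq_bigr => -[a b] _; rewrite -prod_nat_const.
by apply: eq_big => [i | i /eqP[-> ->]]; rewrite // inE xpair_eqE.
Qed.

Lemma ElimS1 x : ElimS [set x] = [set s in S_ n | eliminates (emb x) s].
Proof.
apply/setP => s; rewrite /ElimS /Elim imset_set1 !in_set; congr (_ && _).
apply/existsP/idP => [[t /andP[/set1P -> //]] | elim_s].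
by exists (emb x); rewrite set11.
Qed.

Lemma ElimSU (X Y : {set vec n}) : ElimS (X :|: Y) = ElimS X :|: ElimS Y.
Proof.
apply/setP => s; rewrite /ElimS /Elim imsetU in_setU !in_set -andb_orr.
congr (_ && _); apply/existsP/orP => [[t /andP[/setUP[X_t | Y_t] elim_s]] | [] /existsP[t]].
- by left; apply/existsP; exists t; rewrite X_t.
- by right; apply/existsP; exists t; rewrite Y_t.
- by case/andP => X_t elim_s; exists t; rewrite in_setU X_t.
- by case/andP => Y_t elim_s; exists t; rewrite in_setU Y_t orbT.
Qed.

End Vectors.

Section Columns.

Variables (n : nat) (x y : vec n).
Hypothesis cols : forall i : 'I_n,
  ((x i, y i) == (TPos, TPos)) || ((x i, y i) == (TPos, TNeg)) ||
  ((x i, y i) == (TPos, TZero)) || ((x i, y i) == (TZero, TPos)) ||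
  ((x i, y i) == (TZero, TZero)).

Variables a1 a2 b1 b2 c : nat.
Hypotheses (a1E : a1 = ncol x y TPos TPos) (a2E : a2 = ncol x y TPos TNeg)
  (b1E : b1 = ncol x y TPos TZero) (b2E : b2 = ncol x y TZero TPos)
  (cE : c = ncol x y TZero TZero).

Lemma ncol_eq0 a b : ~~ [|| (a, b) == (TPos, TPos), (a, b) == (TPos, TNeg),
    (a, b) == (TPos, TZero), (a, b) == (TZero, TPos) | (a, b) == (TZero, TZero)] ->
  ncol x y a b = 0%N.
Proof.
move=> not_col; apply: eq_card0 => i; rewrite inE; apply/negP => /andP[/eqP xi /eqP yi].
by move: (cols i) not_col; rewrite xi yi -!orbA => ->.
Qed.

Lemma card_coordwise2_cols (P Q : rel trit) :
  #|[set s | coordwise2 P Q x y s]|%:R =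
    (col_count P Q TPos TPos)%:R ^+ a1 * (col_count P Q TPos TNeg)%:R ^+ a2 *
    (col_count P Q TPos TZero)%:R ^+ b1 * (col_count P Q TZero TPos)%:R ^+ b2 *
    (col_count P Q TZero TZero)%:R ^+ c :> int.
Proof.
rewrite card_coordwise2 prod_ncol !big_trit /=.
rewrite !(@ncol_eq0 TNeg) ?(@ncol_eq0 TZero TNeg) ?xpair_eqE ?eq_tritE //.
rewrite -a1E -a2E -b1E -b2E -cE.
by rewrite !expn0 !mul1n !muln1 !natrM !natrX; ring.
Qed.

Lemma card_eliminates_x :
  #|[set s | eliminates (emb x) s]|%:R = 2 * 3 ^+ (b2 + c) * (2 ^+ (a1 + a2 + b1) - 1) :> int.
Proof.
rewrite (@card_lincomb _ _ [:: (1, coordwise2 (sign_agree true) unconstrained x y);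
    (1, coordwise2 (sign_agree false) unconstrained x y);
    (-2, coordwise2 vanish unconstrained x y)]) => [|s].
  rewrite !big_cons big_nil !card_coordwise2_cols /col_count !card_trit /= !expr1n !exprD.
  ring.
rewrite !big_cons big_nil /coordwise2 /= coordwise_unconstrained !andbT.
by rewrite eliminates_emb_indicator; ring.
Qed.

Lemma card_eliminates_y :
  #|[set s | eliminates (emb y) s]|%:R = 2 * 3 ^+ (b1 + c) * (2 ^+ (a1 + a2 + b2) - 1) :> int.
Proof.
rewrite (@card_lincomb _ _ [:: (1, coordwise2 unconstrained (sign_agree true) x y);
    (1, coordwise2 unconstrained (sign_agree false) x y);
    (-2, coordwise2 unconstrained vanish x y)]) => [|s].
  rewrite !big_cons big_nil !card_coordwise2_cols /col_count !card_trit /= !expr1n !exprD.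
  ring.
rewrite !big_cons big_nil /coordwise2 /= coordwise_unconstrained.
by rewrite eliminates_emb_indicator; ring.
Qed.

Lemma card_eliminates_xy :
  #|[set s | eliminates (emb x) s && eliminates (emb y) s]|%:R =
    2 * 3 ^+ c * (2 ^+ (b1 + b2) * (2 ^+ a1 + 2 ^+ a2) - 2 ^+ b1.+1 - 2 ^+ b2.+1 + 2) :> int.
Proof.
rewrite (@card_lincomb _ _ [::
    (1, coordwise2 (sign_agree true) (sign_agree true) x y);
    (1, coordwise2 (sign_agree true) (sign_agree false) x y);
    (1, coordwise2 (sign_agree false) (sign_agree true) x y);
    (1, coordwise2 (sign_agree false) (sign_agree false) x y);
    (-2, coordwise2 vanish (sign_agree true) x y); (-2, coordwise2 vanish (sign_agree false) x y);
    (-2, coordwise2 (sign_agree true) vanish x y); (-2, coordwise2 (sign_agree false) vanish x y);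
    (4, coordwise2 vanish vanish x y)]) => [|s].
  rewrite !big_cons big_nil !card_coordwise2_cols /col_count !card_trit /= !expr1n !exprS !exprD.
  ring.
rewrite -mulnb natrM !eliminates_emb_indicator !big_cons big_nil /coordwise2 /= -!mulnb !natrM.
ring.
Qed.

Lemma card_ElimS_x :
  #|ElimS [set x]|%:R = 3 ^+ (b2 + c) * (2 ^+ (a1 + a2 + b1) - 1) :> int.
Proof.
apply: (@mulfI _ 2) => //; rewrite -natrM ElimS1 card_S_half ?card_eliminates_x ?mulrA // => s.
  exact: eliminates_vneg.
exact: eliminates_nonzero.
Qed.

Lemma card_ElimS_y :
  #|ElimS [set y]|%:R = 3 ^+ (b1 + c) * (2 ^+ (a1 + a2 + b2) - 1) :> int.
Proof.
apply: (@mulfI _ 2) => //; rewrite -natrM ElimS1 card_S_half ?card_eliminates_y ?mulrA // => s.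
  exact: eliminates_vneg.
exact: eliminates_nonzero.
Qed.

Lemma card_ElimS_xI :
  #|ElimS [set x] :&: ElimS [set y]|%:R =
    3 ^+ c * (2 ^+ (b1 + b2) * (2 ^+ a1 + 2 ^+ a2) - 2 ^+ b1.+1 - 2 ^+ b2.+1 + 2) :> int.
Proof.
have -> : ElimS [set x] :&: ElimS [set y] =
    [set s in S_ n | eliminates (emb x) s && eliminates (emb y) s].
  by apply/setP => s; rewrite !ElimS1 !in_set andbACA andbb.
apply: (@mulfI _ 2) => //; rewrite -natrM card_S_half ?card_eliminates_xy ?mulrA // => s.
  by rewrite !eliminates_vneg.
by case/andP=> /eliminates_nonzero.
Qed.

End Columns.

Unset Implicit Arguments.

Theorem mainTheorem14 (n : nat) (x y : vec n) (a1 a2 b1 b2 c : nat) :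
  x \in S_ n -> y \in S_ n ->
  (forall i : 'I_n,
     ((x i, y i) == (TPos, TPos)) || ((x i, y i) == (TPos, TNeg)) ||
     ((x i, y i) == (TPos, TZero)) || ((x i, y i) == (TZero, TPos)) ||
     ((x i, y i) == (TZero, TZero))) ->
  a1 = ncol x y TPos TPos -> a2 = ncol x y TPos TNeg ->
  b1 = ncol x y TPos TZero -> b2 = ncol x y TZero TPos ->
  c = ncol x y TZero TZero ->
  ((#|ElimS [set x] :&: ElimS [set y]| : int) =
     3 ^+ c * (2 ^+ (b1 + b2) * (2 ^+ a1 + 2 ^+ a2) - 2 ^+ b1.+1 - 2 ^+ b2.+1 + 2))
  /\
  ((#|ElimS [set x; y]| : int) =
     3 ^+ c * (3 ^+ b1 * 2 ^+ (a1 + a2 + b2) + 3 ^+ b2 * 2 ^+ (a1 + a2 + b1)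
               - 2 ^+ (b1 + b2) * (2 ^+ a1 + 2 ^+ a2) - 3 ^+ b1 - 3 ^+ b2
               + 2 ^+ b1.+1 + 2 ^+ b2.+1 - 2)).
Proof.
move=> _ _ cols a1E a2E b1E b2E cE.
have card_xI := card_ElimS_xI cols a1E a2E b1E b2E cE.
split; first by rewrite -natz card_xI.
rewrite ElimSU; apply: (addIr #|ElimS [set x] :&: ElimS [set y]|%:Z).
rewrite -PoszD cardsUI PoszD -!natz card_xI (card_ElimS_x cols a1E a2E b1E b2E cE).
by rewrite (card_ElimS_y cols a1E a2E b1E b2E cE) !exprD !exprS; ring.
Qed.
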